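(* Let $\Omega\subset\mathbb{R}^N$ be a bounded open connected set, $F:\Omega\times\mathbb{R}\times\mathcal{S}(N)\to\mathbb{R}$ continuous with $\{(r,A):F(x,r,A)=0\}\neq\emptyset$ for each $x\in\Omega$, and let $\Phi$ be either a Hausdorff continuous proper elliptic map on $\Omega$ (constrained case) or $\Phi(x)=\mathbb{R}\times\mathcal{S}(N)$ for all $x$ (unconstrained case). Suppose $\Theta(x):=\{(r,A)\in\Phi(x):F(x,r,A)\ge0\}$ is a proper elliptic map. Assume that for every open $\Omega'\subset\subset\Omega$ and every $\eta>0$ there exists $\delta=\delta(\eta,\Omega')>0$ such that $F(y,r-\eta,A+\eta I)\ge F(x,r,A)$ for all $x,y\in\Omega'$ with $|x-y|<\delta$ and all $(r,A)\in\Phi(x)$. Then $\Theta$ is Hausdorff continuous on $\Omega$.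
   Context: $\mathcal{S}(N)$: real symmetric $N\times N$ matrices with the usual partial order, eigenvalues $\lambda_i(A)$, identity $I$. $\mathcal{Q}:=\{(s,P): s\le0,\ P\ge0\}$. A proper elliptic map assigns to each $x\in\Omega$ a closed, nonempty set $\subsetneq\mathbb{R}\times\mathcal{S}(N)$ invariant under adding elements of $\mathcal Q$. With the norm $\|(r,A)\|=\max\{|r|,\max_i|\lambda_i(A)|\}$ and the Hausdorff distance $d_{\mathcal H}$ between closed subsets (possibly $+\infty$), a map $\Theta$ is Hausdorff continuous on $\Omega$ if for all $x\in\Omega$ and $\eta>0$ there is $\delta>0$ with $d_{\mathcal H}(\Theta(x),\Theta(y))<\eta$ whenever $y\in\Omega$, $|x-y|<\delta$. *)

From HB Require Import structures.
From mathcomp Require Import all_boot all_order all_algebra.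
From mathcomp Require Import all_classical all_reals all_analysis.
Set Implicit Arguments. Unset Strict Implicit. Unset Printing Implicit Defensive.
Import Order.TTheory GRing.Theory Num.Theory.
Import numFieldNormedType.Exports.
Local Open Scope classical_set_scope.
Local Open Scope ring_scope.

Section Defs.
Variables (R : realType) (N : nat).

Definition eucl (x y : 'rV[R]_N) : R :=
  Num.sqrt (\sum_(i < N) (x ord0 i - y ord0 i) ^+ 2).

Definition symmx (A : 'M[R]_N) : Prop := A^T = A.

Definition psd (P : 'M[R]_N) : Prop :=
  symmx P /\ forall v : 'rV[R]_N, 0 <= (v *m P *m v^T) ord0 ord0.

Definition eignorm (A : 'M[R]_N) : R :=
  sup [set `|a| | a in [set a : R | eigenvalue A a]].

Definition pdist (p q : R * 'M[R]_N) : R :=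
  Num.max `|p.1 - q.1| (eignorm (p.2 - q.2)).

Definition RS : set (R * 'M[R]_N) := [set p | symmx p.2].

Definition Qcone : set (R * 'M[R]_N) := [set p | p.1 <= 0 /\ psd p.2].

Definition nclosed (C : set (R * 'M[R]_N)) : Prop :=
  forall p, RS p ->
    (forall e : R, 0 < e -> exists2 q, C q & pdist p q < e) -> C p.

Definition proper_elliptic (Omega : set 'rV[R]_N)
    (Th : 'rV[R]_N -> set (R * 'M[R]_N)) : Prop :=
  forall x, Omega x ->
    [/\ Th x `<=` RS, nclosed (Th x), Th x !=set0, Th x != RS &
        forall p q, Th x p -> Qcone q -> Th x (p.1 + q.1, p.2 + q.2)].

(* distance from a point to a set (+oo if the set is empty) *)
Definition pt_set_dist (p : R * 'M[R]_N) (Y : set (R * 'M[R]_N)) : \bar R :=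
  ereal_inf [set (pdist p q)%:E | q in Y].

Definition hausdorff_dist (X Y : set (R * 'M[R]_N)) : \bar R :=
  Order.max (ereal_sup [set pt_set_dist p Y | p in X])
            (ereal_sup [set pt_set_dist q X | q in Y]).

Definition hausdorff_continuous (Omega : set 'rV[R]_N)
    (Th : 'rV[R]_N -> set (R * 'M[R]_N)) : Prop :=
  forall x, Omega x -> forall eta : R, 0 < eta ->
    exists2 delta : R, 0 < delta &
      forall y, Omega y -> eucl x y < delta ->
        (hausdorff_dist (Th x) (Th y) < eta%:E)%E.

Definition F_continuous (Omega : set 'rV[R]_N)
    (F : 'rV[R]_N -> R -> 'M[R]_N -> R) : Prop :=
  forall x r A, Omega x -> symmx A -> forall e : R, 0 < e ->
    exists2 d : R, 0 < d &
      forall y s B, Omega y -> symmx B ->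
        eucl x y < d -> pdist (r, A) (s, B) < d ->
        `|F x r A - F y s B| < e.

Definition cc_subset (O' O : set 'rV[R]_N) : Prop :=
  compact (closure O') /\ closure O' `<=` O.

End Defs.

(* Shifting (r, A) to (r - c, A + c I) moves it by at most c in the norm of
   R x S(N), and by the structural condition on F it does not decrease F when
   the base point moves from x to a nearby y.  The shifted point also stays in
   Phi(y): Phi(y) contains some (s, B) within c of (r, A), and the difference
   (r - c - s, A + c I - B) lies in Q because all eigenvalues of A - B exceed
   -c, which makes A - B + c I positive semidefinite by the Rayleigh
   characterisation of the least eigenvalue.  So every point of Theta(x) is
   within c of Theta(y) and vice versa. *)

From HB Require Import structures.
From mathcomp Require Import all_boot all_order all_algebra.
From mathcomp Require Import all_classical all_reals all_analysis.
From mathcomp Require Import ring lra.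
Import Order.TTheory GRing.Theory Num.Theory.
Import numFieldNormedType.Exports.
Local Open Scope classical_set_scope.
Local Open Scope ring_scope.
Set Implicit Arguments. Unset Strict Implicit. Unset Printing Implicit Defensive.

Lemma quadratic_ge0_linear_eq0 (R : realFieldType) (b c : R) :
  0 <= c -> (forall t, 0 <= 2 * t * b + t ^+ 2 * c) -> b = 0.
Proof.
move=> c0 ge0; have c1 : 0 < c + 1 by rewrite ltr_wpDl.
have := ge0 (- b / (c + 1)).
have -> : 2 * (- b / (c + 1)) * b + (- b / (c + 1)) ^+ 2 * c =
          b ^+ 2 * (- c - 2) / (c + 1) ^+ 2.
  by field; rewrite gt_eqF.
rewrite pmulr_lge0 ?invr_gt0 ?exprn_gt0 // => le0.
apply/eqP; rewrite -sqrf_eq0 eq_le sqr_ge0 andbT; have := sqr_ge0 b; nra.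
Qed.

Section QuadraticForm.
Variables (R : realFieldType) (n : nat).
Implicit Types (M : 'M[R]_n) (v w : 'rV[R]_n).

Definition qform M v : R := (v *m M *m v^T) ord0 ord0.
Definition sqnorm v : R := (v *m v^T) ord0 ord0.

Lemma sqnormE v : sqnorm v = \sum_i v ord0 i ^+ 2.
Proof. by rewrite /sqnorm mxE; apply: eq_bigr => i _; rewrite mxE expr2. Qed.

Lemma sqnorm_ge0 v : 0 <= sqnorm v.
Proof. by rewrite sqnormE; apply: sumr_ge0 => i _; exact: sqr_ge0. Qed.

Lemma sqr_coord_le_sqnorm v i : v ord0 i ^+ 2 <= sqnorm v.
Proof.
by rewrite sqnormE (bigD1 i) //= lerDl; apply: sumr_ge0 => j _; exact: sqr_ge0.
Qed.

Lemma sqnorm_gt0 v : v != 0 -> 0 < sqnorm v.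
Proof.
apply: contraNT; rewrite -leNgt => le0; apply/eqP/rowP => i; rewrite [RHS]mxE.
apply/eqP; rewrite -sqrf_eq0 eq_le sqr_ge0 andbT.
exact: le_trans (sqr_coord_le_sqnorm v i) le0.
Qed.

Lemma qform1 v : qform 1%:M v = sqnorm v.
Proof. by rewrite /qform mulmx1. Qed.

Lemma qformZ M k v : qform M (k *: v) = k ^+ 2 * qform M v.
Proof.
by rewrite /qform -scalemxAl linearZ /= -scalemxAr -scalemxAl !mxE mulrA expr2.
Qed.

Lemma sqnormZ k v : sqnorm (k *: v) = k ^+ 2 * sqnorm v.
Proof. by rewrite /sqnorm linearZ /= -scalemxAr -scalemxAl !mxE mulrA expr2. Qed.

Lemma qformDscalar M m v : qform (M + m%:M) v = qform M v + m * sqnorm v.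
Proof.
by rewrite /qform /sqnorm mulmxDr mulmxDl mul_mx_scalar -scalemxAl !mxE.
Qed.

Lemma qformBscalar M m v : qform (M - m%:M) v = qform M v - m * sqnorm v.
Proof.
by rewrite /qform /sqnorm mulmxBr mulmxBl mul_mx_scalar -scalemxAl !mxE.
Qed.

Lemma qform_eigenvector M a v : v *m M = a *: v -> qform M v = a * sqnorm v.
Proof. by rewrite /qform /sqnorm => ->; rewrite -scalemxAl [LHS]mxE. Qed.

Lemma qform_polar M v w t : M^T = M ->
  qform M (v + t *: w) =
  qform M v + 2 * t * (v *m M *m w^T) ord0 ord0 + t ^+ 2 * qform M w.
Proof.
move=> sM; have wMv : (w *m M *m v^T) ord0 ord0 = (v *m M *m w^T) ord0 ord0.
  have <- : (w *m M *m v^T)^T = v *m M *m w^T.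
    by rewrite !trmx_mul trmxK sM mulmxA.
  by rewrite [RHS]mxE.
rewrite /qform linearD /= linearZ /= !mulmxDl !mulmxDr -!scalemxAl -!scalemxAr.
move: wMv; move: (v *m M *m v^T) (v *m M *m w^T) (w *m M *m v^T) (w *m M *m w^T).
by move=> a b c d; rewrite !mxE => ->; ring.
Qed.

Lemma qform_ge0_eq0_mul_eq0 M u : M^T = M -> (forall v, 0 <= qform M v) ->
  qform M u = 0 -> u *m M = 0.
Proof.
move=> sM ge0 Mu0; apply/rowP => j; rewrite [RHS]mxE.
pose ej : 'rV[R]_n := delta_mx 0 j.
have <- : (u *m M *m ej^T) ord0 ord0 = (u *m M) ord0 j.
  by rewrite trmx_delta -colE mxE.
apply: (quadratic_ge0_linear_eq0 (ge0 ej)) => t.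
by have := ge0 (u + t *: ej); rewrite qform_polar // Mu0 add0r.
Qed.

End QuadraticForm.

Section SymmetricSpectrum.
Variable R : realType.

Lemma continuous_sum (T : topologicalType) (I : Type) (s : seq I)
    (f : I -> T -> R) :
  (forall i, continuous (f i)) -> continuous (fun x => \sum_(i <- s) f i x).
Proof.
move=> fc; rewrite -fct_sumE; apply: (big_ind (fun g : T -> R => continuous g)).
- exact: cst_continuous.
- by move=> g h gc hc x; exact: continuousD (gc x) (hc x).
- by move=> i _; exact: fc.
Qed.

Lemma qform_continuous n (M : 'M[R]_n) : continuous (qform M).
Proof.
have -> : qform M = fun v => \sum_j (\sum_k v ord0 k * M k j) * v ord0 j.
  by apply: funext => v; rewrite /qform mxE; apply: eq_bigr => j _; rewrite !mxE.
apply: continuous_sum => j v; apply: continuousM; last exact: coord_continuous.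
by apply: continuous_sum => k w; apply: continuousM;
  [exact: coord_continuous | exact: cst_continuous].
Qed.

Lemma box_compact n (x : 'rV[R]_n) e :
  compact [set v : 'rV[R]_n | forall i, `|x ord0 i - v ord0 i| <= e].
Proof.
have -> : [set v : 'rV[R]_n | forall i, `|x ord0 i - v ord0 i| <= e] =
    [set v | forall i, `[x ord0 i - e, x ord0 i + e]%classic (v ord0 i)].
  apply/seteqP; split => v /= vx i; have := vx i;
    by rewrite /= in_itv /= distrC ler_distl.
apply: (@rV_compact R n (fun i => `[x ord0 i - e, x ord0 i + e]%classic)) => i.
exact: segment_compact.
Qed.

Lemma qform_ge_sphere n (M : 'M[R]_n) m :
  (forall v, sqnorm v = 1 -> m <= qform M v) ->
  forall v, m * sqnorm v <= qform M v.
Proof.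
move=> ge_m v; have [->|v0] := eqVneq v 0.
  by rewrite /qform /sqnorm !mul0mx mxE mulr0.
have vpos := sqnorm_gt0 v0; set k := (Num.sqrt (sqnorm v))^-1.
have k2 : k ^+ 2 = (sqnorm v)^-1 by rewrite exprVn sqr_sqrtr ?sqnorm_ge0.
have := ge_m (k *: v); rewrite sqnormZ qformZ k2 mulVf ?gt_eqF // => /(_ erefl).
by rewrite -ler_pdivlMr // mulrC.
Qed.

Lemma sphere_compact n : compact [set v : 'rV[R]_n | sqnorm v = 1].
Proof.
apply: (subclosed_compact _ (@box_compact _ 0 1)).
- have -> : [set v : 'rV[R]_n | sqnorm v = 1] = qform 1%:M @^-1` [set 1].
    by apply/seteqP; split => v /=; rewrite qform1.
  by apply: preimage_closed; [move=> v _; exact: qform_continuous | exact: closed_eq].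
move=> v /= v1 i; rewrite mxE sub0r normrN -(expr_le1 (_ : 0 < 2)%N) //.
by rewrite real_normK ?num_real // -v1 sqr_coord_le_sqnorm.
Qed.

(* Rayleigh: the minimum of [qform M] on the unit sphere is an eigenvalue. *)
Lemma qform_min_eigenvalue n (M : 'M[R]_n.+1) : M^T = M ->
  exists2 m, eigenvalue M m & forall v, m * sqnorm v <= qform M v.
Proof.
move=> sM; have sphere0 : [set v : 'rV[R]_n.+1 | sqnorm v = 1] !=set0.
  exists (delta_mx 0 0); rewrite /= sqnormE (bigD1 ord0) //= big1 ?addr0.
    by rewrite mxE eqxx expr1n.
  by move=> i /negbTE ni; rewrite mxE ni andbF expr0n.
have [u /[!inE] u1 umin] := compact_EVT_min sphere0 (@sphere_compact n.+1)
  (continuous_subspaceT (@qform_continuous _ M)).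
have ge_min v : qform M u * sqnorm v <= qform M v.
  by apply: qform_ge_sphere => w w1; apply: umin; rewrite inE.
exists (qform M u) => //; pose P := M - (qform M u)%:M.
have uP0 : u *m P = 0.
  apply: qform_ge0_eq0_mul_eq0; first by rewrite /P linearB /= tr_scalar_mx sM.
    by move=> v; rewrite qformBscalar subr_ge0.
  by rewrite qformBscalar u1 mulr1 subrr.
apply/eigenvalueP; exists u.
  by apply/eqP; rewrite -subr_eq0 -mul_mx_scalar -mulmxBr uP0.
by apply: contra_eq_neq u1 => ->; rewrite /sqnorm mul0mx mxE eq_sym oner_neq0.
Qed.

Lemma eigenvalue_ge_qform_lb n (M : 'M[R]_n) m a :
  (forall v, m * sqnorm v <= qform M v) -> eigenvalue M a -> m <= a.
Proof.
move=> lb /eigenvalueP [v va v0]; have := lb v.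
by rewrite (qform_eigenvector va) ler_pM2r // sqnorm_gt0.
Qed.

Lemma sym_eigenvalues_bounded n (M : 'M[R]_n) : M^T = M ->
  exists B, forall a, eigenvalue M a -> `|a| <= B.
Proof.
case: n M => [|n] M sM.
  by exists 0 => a /eigenvalueP [v _]; rewrite thinmx0 eqxx.
have [m _ lbM] := qform_min_eigenvalue sM.
have [m' _ lbNM] : exists2 m', eigenvalue (- M) m' &
    forall v, m' * sqnorm v <= qform (- M) v.
  by apply: qform_min_eigenvalue; rewrite linearN /= sM.
exists (`|m| + `|m'|) => a Ma.
have ma := eigenvalue_ge_qform_lb lbM Ma.
have m'a : m' <= - a.
  apply: eigenvalue_ge_qform_lb lbNM _; move: Ma => /eigenvalueP [v va v0].
  by apply/eigenvalueP; exists v; rewrite // mulmxN va scaleNr.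
have := ler_norm (- m); have := ler_norm (- m'); rewrite !normrN.
have := normr_ge0 m; have := normr_ge0 m'.
by rewrite ler_norml; move=> *; apply/andP; split; lra.
Qed.

Lemma psdDscalar n (M : 'M[R]_n) c : M^T = M ->
  (forall a, eigenvalue M a -> - c <= a) -> psd (M + c%:M).
Proof.
move=> sM ge_c; split; first by rewrite /symmx linearD /= tr_scalar_mx sM.
move=> v; rewrite -/(qform _ v); case: n M sM ge_c v => [|n] M sM ge_c v.
  by rewrite /qform mxE big_ord0.
have [m Mm lbM] := qform_min_eigenvalue sM.
rewrite qformDscalar; apply: le_trans (lerD (lbM v) (lexx _)).
by rewrite -mulrDl mulr_ge0 ?sqnorm_ge0 // -lerBlDr sub0r ge_c.
Qed.

Lemma le_eignorm n (M : 'M[R]_n) a : M^T = M -> eigenvalue M a ->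
  `|a| <= eignorm M.
Proof.
move=> sM Ma; have [B lbB] := sym_eigenvalues_bounded sM.
apply: sup_upper_bound; last by exists a.
split; first by exists `|a|, a.
by exists B => _ [b Mb <-]; exact: lbB.
Qed.

Lemma eignormN_scalar_le n (c : R) : 0 <= c -> eignorm (- c%:M : 'M[R]_n) <= c.
Proof.
move=> c0; rewrite /eignorm; set S := [set `|a| | a in _].
have [S0|/set0P/negP/negPn/eqP ->] := pselect (S !=set0); last by rewrite sup0.
apply: ge_sup => // _ [a /eigenvalueP [v va v0] <-].
move: va; rewrite mulmxN mul_mx_scalar -scaleNr => /eqP.
rewrite -subr_eq0 -scalerBl scalemx_eq0 (negbTE v0) orbF subr_eq0 => /eqP <-.
by rewrite normrN ger0_norm.
Qed.

End SymmetricSpectrum.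

Section Domain.
Variables (R : realType) (N : nat).
Implicit Types (x y : 'rV[R]_N) (O : set 'rV[R]_N).

Lemma euclC x y : eucl x y = eucl y x.
Proof.
by rewrite /eucl; congr Num.sqrt; apply: eq_bigr => i _; rewrite -sqrrN opprB.
Qed.

Lemma coord_le_eucl x y i : `|x ord0 i - y ord0 i| <= eucl x y.
Proof.
rewrite /eucl -sqrtr_sqr ler_sqrt; last by apply: sumr_ge0 => j _; exact: sqr_ge0.
by rewrite (bigD1 i) //= lerDl; apply: sumr_ge0 => j _; exact: sqr_ge0.
Qed.

Lemma ball_eucl x y d : 0 < d -> eucl x y < d -> ball x d y.
Proof.
move=> d0 xy; rewrite -ball_normE /ball_ /= [X in X < _]/Num.Def.normr /= mx_normrE.
apply/bigmax_ltP; split => // -[a j] _ /=; rewrite ord1 !mxE.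
exact: le_lt_trans (coord_le_eucl x y j) xy.
Qed.

Lemma ball_coord x y d i : ball x d y -> `|x ord0 i - y ord0 i| <= d.
Proof.
rewrite -ball_normE /ball_ /= [X in X < _]/Num.Def.normr /= mx_normrE => xy.
have -> : x ord0 i - y ord0 i = (x - y) ord0 i by rewrite !mxE.
apply: ltW; apply: le_lt_trans xy.
by apply/bigmax_geP; right; exists (ord0, i).
Qed.

Lemma cc_subset_half_ball O x e : 0 < e -> ball x e `<=` O ->
  cc_subset (ball x (e / 2)) O.
Proof.
move=> e0 xeO; have sub : closure (ball x (e / 2)) `<=` ball x e.
  exact: subset_closure_half.
split; last by move=> y /sub /xeO.
apply: (subclosed_compact (@closed_closure _ _) (@box_compact _ _ x e)).
by move=> y /sub /ball_coord.
Qed.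

End Domain.

Section QShift.
Variables (R : realType) (N : nat).
Implicit Types (X Y P : set (R * 'M[R]_N)) (p q : R * 'M[R]_N) (c : R).

Definition qshift c p : R * 'M[R]_N := (p.1 - c, p.2 + c%:M).

Lemma pdist_qshift c p : 0 <= c -> pdist p (qshift c p) <= c.
Proof.
move=> c0; rewrite /pdist /= ge_max opprB addrC subrK ger0_norm // lexx /=.
by rewrite opprD addrA subrr add0r eignormN_scalar_le.
Qed.

Lemma hausdorff_distC X Y : hausdorff_dist X Y = hausdorff_dist Y X.
Proof. by rewrite /hausdorff_dist maxC. Qed.

Lemma hausdorff_dist_lt_near X Y c p : (hausdorff_dist X Y < c%:E)%E -> X p ->
  exists2 q, Y q & pdist p q < c.
Proof.
rewrite /hausdorff_dist gt_max => /andP[ltc _] Xp.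
have : (pt_set_dist p Y < c%:E)%E.
  by apply: le_lt_trans ltc; apply: ereal_sup_ubound; exists p.
by move/ereal_inf_lt => [_ [q Yq <-]]; rewrite lte_fin; exists q.
Qed.

Lemma hausdorff_dist_le X Y c :
  (forall p, X p -> exists2 q, Y q & pdist p q <= c) ->
  (forall q, Y q -> exists2 p, X p & pdist q p <= c) ->
  (hausdorff_dist X Y <= c%:E)%E.
Proof.
have pt_le Z W : (forall p, Z p -> exists2 q, W q & pdist p q <= c) ->
    (ereal_sup [set pt_set_dist p W | p in Z] <= c%:E)%E.
  move=> near; apply: ge_ereal_sup => _ [p Zp <-]; have [q Wq pq] := near p Zp.
  by apply: le_trans (_ : (pdist p q)%:E <= _)%E; [apply: ereal_inf_lbound; exists q|].
by move=> XY YX; rewrite /hausdorff_dist ge_max !pt_le.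
Qed.

Lemma hausdorff_dist_le_qshift X Y c : 0 <= c ->
  (forall p, X p -> Y (qshift c p)) -> (forall p, Y p -> X (qshift c p)) ->
  (hausdorff_dist X Y <= c%:E)%E.
Proof.
move=> c0 XY YX.
by apply: hausdorff_dist_le => [p /XY|p /YX] shifted;
  exists (qshift c p) => //; exact: pdist_qshift.
Qed.

Lemma qshift_in_elliptic P c p q : P `<=` @RS R N ->
  (forall p q, P p -> Qcone q -> P (p.1 + q.1, p.2 + q.2)) ->
  symmx p.2 -> P q -> pdist p q < c -> P (qshift c p).
Proof.
move=> PRS Pell sp Pq; have sq : symmx q.2 := PRS _ Pq.
rewrite /pdist gt_max => /andP [lt1 lt2].
have sD : (p.2 - q.2)^T = p.2 - q.2 by rewrite linearB /= sp sq.
have Qpq : Qcone (p.1 - c - q.1, p.2 + c%:M - q.2).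
  split => /=; first by move: lt1; rewrite ltr_norml => /andP[? ?]; lra.
  rewrite addrAC; apply: psdDscalar => // a /(le_eignorm sD) /le_lt_trans /(_ lt2).
  by rewrite ltr_norml => /andP[/ltW].
by have := Pell _ _ Pq Qpq; rewrite /= !(addrC q.1, addrC q.2) !subrK.
Qed.

Lemma hausdorff_lt_qshift P1 P2 c p : P2 `<=` @RS R N ->
  (forall p q, P2 p -> Qcone q -> P2 (p.1 + q.1, p.2 + q.2)) ->
  (hausdorff_dist P1 P2 < c%:E)%E -> symmx p.2 -> P1 p -> P2 (qshift c p).
Proof.
move=> P2RS P2ell P12 sp /(hausdorff_dist_lt_near P12) [q P2q pq].
exact: qshift_in_elliptic P2RS P2ell sp P2q pq.
Qed.

Lemma constraint_qshift_near (Omega : set 'rV[R]_N) Phi x c :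
  (proper_elliptic Omega Phi /\ hausdorff_continuous Omega Phi) \/
    (forall x, Omega x -> Phi x = @RS R N) ->
  Omega x -> 0 < c ->
  exists2 d, 0 < d & forall y, Omega y -> eucl x y < d -> forall p, symmx p.2 ->
    (Phi x p -> Phi y (qshift c p)) /\ (Phi y p -> Phi x (qshift c p)).
Proof.
move=> [[Phi_ell Phi_cont]|Phi_RS] Ox c0.
  have [d d0 near_x] := Phi_cont x Ox c c0.
  exists d => // y Oy xy p sp; have xy_c := near_x y Oy xy.
  have [PxRS _ _ _ Px_ell] := Phi_ell x Ox.
  have [PyRS _ _ _ Py_ell] := Phi_ell y Oy.
  split; first exact: hausdorff_lt_qshift.
  by apply: hausdorff_lt_qshift => //; rewrite hausdorff_distC.
exists 1 => // y Oy _ p sp; rewrite Phi_RS // Phi_RS //.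
by split=> _; rewrite /RS /= /symmx linearD /= tr_scalar_mx sp.
Qed.

Lemma superlevel_qshift P1 P2 (F1 F2 : R -> 'M[R]_N -> R) c :
  [set p | P1 p /\ 0 <= F1 p.1 p.2] `<=` @RS R N ->
  (forall p, symmx p.2 -> P1 p -> P2 (qshift c p)) ->
  (forall r A, P1 (r, A) -> F1 r A <= F2 (r - c) (A + c%:M)) ->
  forall p, [set p | P1 p /\ 0 <= F1 p.1 p.2] p ->
  [set p | P2 p /\ 0 <= F2 p.1 p.2] (qshift c p).
Proof.
move=> S1RS P12 F12 [r A] S1p; have [P1p F1p] := S1p.
by split; [apply: P12 (S1RS _ S1p) P1p | apply: le_trans F1p (F12 _ _ P1p)].
Qed.

End QShift.

Theorem theorem6p8 (R : realType) (N : nat) (Omega : set 'rV[R]_N)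
  (F : 'rV[R]_N -> R -> 'M[R]_N -> R)
  (Phi : 'rV[R]_N -> set (R * 'M[R]_N)) :
  bounded_set Omega -> open Omega -> connected Omega ->
  F_continuous Omega F ->
  (forall x, Omega x -> exists r A, symmx A /\ F x r A = 0) ->
  ((proper_elliptic Omega Phi /\ hausdorff_continuous Omega Phi) \/
   (forall x, Omega x -> Phi x = RS (R:=R) (N:=N))) ->
  proper_elliptic Omega (fun x => [set p | Phi x p /\ 0 <= F x p.1 p.2]) ->
  (forall Omega' : set 'rV[R]_N, open Omega' -> cc_subset Omega' Omega ->
     forall eta : R, 0 < eta ->
     exists2 delta : R, 0 < delta &
       forall x y, Omega' x -> Omega' y -> eucl x y < delta ->
       forall r A, Phi x (r, A) ->
         F x r A <= F y (r - eta) (A + eta%:M)) ->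
  hausdorff_continuous Omega (fun x => [set p | Phi x p /\ 0 <= F x p.1 p.2]).
Proof.
move=> _ oO _ _ _ Phi_hyp Theta_ell F_hyp x Ox eta eta0.
have [e e0 xeO] : exists2 e, 0 < e & ball x e `<=` Omega.
  by move/nbhs_ballP: (open_nbhs_nbhs (conj oO Ox)) => [e]; exists e.
have e20 : 0 < e / 2 by rewrite divr_gt0.
have c0 : 0 < eta / 2 by rewrite divr_gt0.
have [dF dF0 F_shift] :=
  F_hyp _ (ball_open _ _) (cc_subset_half_ball e0 xeO) _ c0.
have [dPhi dPhi0 Phi_shift] := constraint_qshift_near Phi_hyp Ox c0.
exists (Num.min dPhi (Num.min dF (e / 2))); first by rewrite !lt_min dPhi0 dF0 e20.
move=> y Oy; rewrite !lt_min => /and3P [xy_Phi xy_F /(ball_eucl e20) xy_ball].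
have x_ball : ball x (e / 2) x by exact: ballxx.
apply: le_lt_trans (_ : ((eta / 2)%:E < eta%:E)%E); last first.
  by rewrite lte_fin ltr_pdivrMr // ltr_pMr // ltr1n.
have [ThxRS _ _ _ _] := Theta_ell x Ox; have [ThyRS _ _ _ _] := Theta_ell y Oy.
apply: hausdorff_dist_le_qshift (ltW c0) _ _; apply: superlevel_qshift => //.
- by move=> p sp; case: (Phi_shift y Oy xy_Phi p sp).
- by move=> r A; apply: F_shift.
- by move=> p sp; case: (Phi_shift y Oy xy_Phi p sp).
- by move=> r A; apply: F_shift; rewrite // euclC.
Qed.
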